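(* Let $\mathcal H$ be a complex pre-Hilbert space, let $M\in\mathbb N$, and for $j=1,\ldots,M$ let $a_j,b_j:\mathcal H\to\mathcal H$ be linear operators that possess adjoints $a_j^*,b_j^*:\mathcal H\to\mathcal H$ (i.e. $(a_j\varphi,\psi)=(\varphi,a_j^*\psi)$ and $(b_j\varphi,\psi)=(\varphi,b_j^*\psi)$ for all $\varphi,\psi\in\mathcal H$). Then, in the sense of quadratic forms on $\mathcal H$, \[ \pm\sum_{j,k=1}^M a_j^*b_k^*b_ja_k\;\leq\;\sum_{j,k=1}^M a_j^*b_k^*b_ka_j , \] that is, for every $\varphi\in\mathcal H$ and each choice of sign, $\pm\big(\varphi,\sum_{j,k} a_j^*b_k^*b_ja_k\varphi\big)\le \big(\varphi,\sum_{j,k} a_j^*b_k^*b_ka_j\varphi\big)$ (both sides being real).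
   Context: For operators $S,T$ on $\mathcal H$, $S\le T$ means $(\varphi,S\varphi)\le(\varphi,T\varphi)$ for all $\varphi\in\mathcal H$. *)

From HB Require Import structures.
From mathcomp Require Import all_boot all_order all_algebra.
From mathcomp Require Import reals complex.
Set Implicit Arguments. Unset Strict Implicit. Unset Printing Implicit Defensive.
Import Order.TTheory GRing.Theory Num.Theory.
Local Open Scope ring_scope.

(* A complex pre-Hilbert space is a C-vector space H (lmodType R[i]) with an
   inner product ( , ) that is conjugate-linear in the FIRST argument and
   linear in the SECOND (physics convention, as in (phi, T phi)),
   conjugate symmetric and positive definite. *)
Definition is_inner_product (R : realType) (H : lmodType R[i])
    (ip : H -> H -> R[i]) : Prop :=
  [/\ (forall (x y z : H) (c : R[i]), ip x (c *: y + z) = c * ip x y + ip x z),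
      (forall x y : H, ip y x = (ip x y)^*),
      (forall x : H, 0 <= ip x x) &
      (forall x : H, ip x x = 0 -> x = 0)].

Definition is_adjoint (R : realType) (H : lmodType R[i])
    (ip : H -> H -> R[i]) (T Ts : H -> H) : Prop :=
  forall phi psi : H, ip (T phi) psi = ip phi (Ts psi).

From HB Require Import structures.
From mathcomp Require Import all_boot all_order all_algebra.
From mathcomp Require Import reals complex.
From mathcomp Require Import ring.
Import Order.TTheory GRing.Theory Num.Theory.
Local Open Scope ring_scope.

(* With v j k := b_j a_k phi, the adjoint relations turn the two quadratic
   forms into sum_(j,k) (v k j, v j k) and sum_(j,k) (v k j, v k j).  Summing
   0 <= (x -+ y, x -+ y) = (x,x) + (y,y) -+ ((x,y) + (y,x)) over the pairs
   x = v k j, y = v j k, and using the symmetry of the double sums under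
   j <-> k, gives twice the claimed inequality. *)

Section InnerProduct.
Context {R : realType} {H : lmodType R[i]} {ip : H -> H -> R[i]}.
Hypothesis ip_inner : is_inner_product ip.

Lemma ipDr x y z : ip x (y + z) = ip x y + ip x z.
Proof. by case: ip_inner => lin _ _ _; have := lin x y z 1; rewrite scale1r mul1r. Qed.

Lemma ip0r x : ip x 0 = 0.
Proof. by have := ipDr x 0 0; rewrite addr0 => /(canLR (addrK _)); rewrite subrr. Qed.

Lemma ipNr x y : ip x (- y) = - ip x y.
Proof.
case: ip_inner => lin _ _ _.
by rewrite -[- y]addr0 -scaleN1r lin ip0r addr0 mulN1r.
Qed.

Lemma ipDl x y z : ip (y + z) x = ip y x + ip z x.
Proof. by case: ip_inner => _ sym _ _; rewrite !(sym x) ipDr rmorphD. Qed.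

Lemma ipNl x y : ip (- y) x = - ip y x.
Proof. by case: ip_inner => _ sym _ _; rewrite !(sym x) ipNr rmorphN. Qed.

Lemma ip_sumr x n (F : 'I_n -> H) : ip x (\sum_(i < n) F i) = \sum_(i < n) ip x (F i).
Proof. exact: (big_morph (ip x) (ipDr x) (ip0r x)). Qed.

Lemma ip_cross_le x y : ip x y + ip y x <= ip x x + ip y y.
Proof.
case: ip_inner => _ _ pos _; rewrite -subr_ge0.
have -> : ip x x + ip y y - (ip x y + ip y x) = ip (x - y) (x - y).
  by rewrite !(ipDl, ipDr, ipNl, ipNr) opprK; ring.
exact: pos.
Qed.

Lemma ip_cross_ge x y : - (ip x y + ip y x) <= ip x x + ip y y.
Proof. by have := ip_cross_le x (- y); rewrite ipNr !ipNl ipNr opprK -opprD. Qed.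

Lemma ip_double_sum_swap_le {M} (v : 'I_M -> 'I_M -> H) :
  let cross := \sum_(j < M) \sum_(k < M) ip (v k j) (v j k) in
  let diag := \sum_(j < M) \sum_(k < M) ip (v k j) (v k j) in
  cross <= diag /\ - cross <= diag.
Proof.
move=> cross diag.
have sum2 (F G : 'I_M -> 'I_M -> R[i]) :
    \sum_(j < M) \sum_(k < M) (F j k + G j k) =
    \sum_(j < M) \sum_(k < M) F j k + \sum_(j < M) \sum_(k < M) G j k.
  by rewrite -big_split; apply: eq_bigr => j _; rewrite big_split.
have cross2 : \sum_(j < M) \sum_(k < M) (ip (v k j) (v j k) + ip (v j k) (v k j))
    = cross *+ 2 by rewrite sum2 [X in _ + X]exchange_big mulr2n.
have diag2 : \sum_(j < M) \sum_(k < M) (ip (v k j) (v k j) + ip (v j k) (v j k))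
    = diag *+ 2 by rewrite sum2 [X in _ + X]exchange_big mulr2n.
split; rewrite -(ler_pMn2r (n := 2)) // -diag2.
- by rewrite -cross2; do 2![apply: ler_sum => ? _]; apply: ip_cross_le.
- by rewrite mulNrn -cross2 -sumrN; apply: ler_sum => j _; rewrite -sumrN;
    apply: ler_sum => k _; apply: ip_cross_ge.
Qed.

End InnerProduct.

Theorem lemma3p2 (R : realType) (H : lmodType R[i]) (ip : H -> H -> R[i])
  (Hip : is_inner_product ip) (M : nat)
  (a b : 'I_M -> {linear H -> H}) (as_ bs : 'I_M -> H -> H)
  (Ha : forall j, is_adjoint ip (a j) (as_ j))
  (Hb : forall j, is_adjoint ip (b j) (bs j))
  (phi : H) :
  let lhs := ip phi (\sum_(j < M) \sum_(k < M) as_ j (bs k (b j (a k phi)))) in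
  let rhs := ip phi (\sum_(j < M) \sum_(k < M) as_ j (bs k (b k (a j phi)))) in
  lhs <= rhs /\ - lhs <= rhs.
Proof.
move=> lhs rhs.
have move_adjoints j k (x : H) :
    ip phi (as_ j (bs k x)) = ip (b k (a j phi)) x by rewrite -Ha -Hb.
have double_sum (F : 'I_M -> 'I_M -> H) :
    ip phi (\sum_(j < M) \sum_(k < M) as_ j (bs k (F j k)))
    = \sum_(j < M) \sum_(k < M) ip (b k (a j phi)) (F j k).
  by rewrite (ip_sumr Hip); apply: eq_bigr => j _; rewrite (ip_sumr Hip);
    apply: eq_bigr => k _; apply: move_adjoints.
rewrite /lhs /rhs !double_sum.
by case: (ip_double_sum_swap_le Hip (fun j k => b j (a k phi))); split.
Qed.
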